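(* Let $\mathbf A$ be a finite algebra with a strongly abelian congruence $\alpha$ and let $a,b\in A$ with $(a,b)\in\alpha$. Then $|F_{\mathbf A,ab}(n)|\in O(n^k)$ where $k=\lfloor\log_2|A|\rfloor$.
   Context: $\mathrm{Clo}_n(\mathbf A)$ is the set of $n$-ary term operations of $\mathbf A$, and $F_{\mathbf A,ab}(n)=\{t|_{\{a,b\}^n}\colon\{a,b\}^n\to A\mid t\in\mathrm{Clo}_n(\mathbf A)\}$. A congruence $\alpha$ of $\mathbf A$ is strongly abelian if for every $k\ge1$, every $t\in\mathrm{Clo}_k(\mathbf A)$ and all $x_1,\dots,x_k,y_1,\dots,y_k,z_2,\dots,z_k\in A$ with $(x_i,y_i)\in\alpha$ for $1\le i\le k$ and $(y_i,z_i)\in\alpha$ for $2\le i\le k$, $t(x_1,\dots,x_k)=t(y_1,\dots,y_k)$ implies $t(x_1,z_2,\dots,z_k)=t(y_1,z_2,\dots,z_k)$. *)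

From Stdlib Require Import ClassicalEpsilon.
From HB Require Import structures.
From mathcomp Require Import all_boot.
Set Implicit Arguments. Unset Strict Implicit. Unset Printing Implicit Defensive.

(* An algebra: carrier T, operation symbols I, arity ar, interpretation ops. *)

Inductive term (I : Type) (ar : I -> nat) (n : nat) : Type :=
| Var of 'I_n
| App (o : I) of ('I_(ar o) -> term ar n).

Fixpoint eval_term (T I : Type) (ar : I -> nat)
    (ops : forall o : I, ('I_(ar o) -> T) -> T) (n : nat)
    (t : term ar n) (x : 'I_n -> T) : T :=
  match t with
  | Var i => x i
  | App o f => ops o (fun j => eval_term ops (f j) x)
  end.

Definition Clo (T I : Type) (ar : I -> nat)
    (ops : forall o : I, ('I_(ar o) -> T) -> T) (n : nat) (f : ('I_n -> T) -> T) : Prop :=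
  exists t : term ar n, forall x, f x = eval_term ops t x.

Definition is_congruence (T : finType) (I : Type) (ar : I -> nat)
    (ops : forall o : I, ('I_(ar o) -> T) -> T) (alpha : rel T) : Prop :=
  [/\ reflexive alpha, symmetric alpha, transitive alpha &
      forall (o : I) (x y : 'I_(ar o) -> T),
        (forall j, alpha (x j) (y j)) -> alpha (ops o x) (ops o y)].

Definition strongly_abelian (T : finType) (I : Type) (ar : I -> nat)
    (ops : forall o : I, ('I_(ar o) -> T) -> T) (alpha : rel T) : Prop :=
  forall (k : nat) (t : ('I_k.+1 -> T) -> T), Clo ops t ->
  forall x y z : 'I_k.+1 -> T,
    (forall i, alpha (x i) (y i)) ->
    (forall i, i != ord0 -> alpha (y i) (z i)) ->
    t x = t y ->
    t (fun i => if i == ord0 then x ord0 else z i) =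
    t (fun i => if i == ord0 then y ord0 else z i).

Definition asb (P : Prop) : bool :=
  if excluded_middle_informative P then true else false.

(* A tuple in {a,b}^n is encoded by s : 'I_n -> bool (false ↦ a, true ↦ b);
   when a = b this encoding identifies restrictions exactly as {a,b}^n does. *)
Definition F_ab (T : finType) (I : Type) (ar : I -> nat)
    (ops : forall o : I, ('I_(ar o) -> T) -> T) (a b : T) (n : nat)
    : {set {ffun {ffun 'I_n -> bool} -> T}} :=
  [set g | asb (exists t : ('I_n -> T) -> T,
                  Clo ops t /\ g = [ffun s : {ffun 'I_n -> bool} => t (fun i => if s i then b else a)])].

From mathcomp Require Import all_boot perm.
From Stdlib Require Import FunctionalExtensionality ClassicalEpsilon.
Set Implicit Arguments. Unset Strict Implicit. Unset Printing Implicit Defensive.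

(* A term operation t, restricted to {a,b}^n, is a Boolean function; call a
   coordinate essential if flipping it changes the value somewhere. Strong
   abelianness (applied at an arbitrary coordinate) shows that flipping an
   essential coordinate changes the value EVERYWHERE, so the 2^e inputs that
   vary only the e essential coordinates have pairwise distinct values and
   2^e <= |A|, i.e. e <= k. A Boolean function depending on at most k
   coordinates is determined by a choice of k coordinates and a function
   {0,1}^k -> A, giving at most n^k |A|^(2^k) restrictions. *)

Section BooleanCube.
Variable n : nat.
Implicit Types (s : {ffun 'I_n -> bool}) (i : 'I_n).

Definition upd s i (c : bool) : {ffun 'I_n -> bool} :=
  [ffun j => if j == i then c else s j].

Lemma upd_id s i : upd s i (s i) = s.
Proof. by apply/ffunP => j; rewrite ffunE; case: eqP => [->|]. Qed.

Definition essential (R : eqType) (g : {ffun 'I_n -> bool} -> R) : {set 'I_n} :=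
  [set i | [exists s, g (upd s i false) != g (upd s i true)]].

Definition separates_at (R : eqType) (g : {ffun 'I_n -> bool} -> R) i : Prop :=
  forall s s', s i != s' i -> g s != g s'.

Lemma inessential_upd (R : eqType) (g : {ffun 'I_n -> bool} -> R) s i c c' :
  i \notin essential g -> g (upd s i c) = g (upd s i c').
Proof.
rewrite inE negb_exists => /forallP /(_ s); rewrite negbK => /eqP.
by case: c; case: c'.
Qed.

Lemma essential_agree (R : eqType) (g : {ffun 'I_n -> bool} -> R) s s' :
  {in essential g, forall i, s i = s' i} -> g s = g s'.
Proof.
move=> agree.
pose sm m := [ffun i : 'I_n => if i < m then s' i else s i].
have step m : g (sm m) = g (sm m.+1).
  case: (ltnP m n) => [lt_mn|le_nm]; last first.
    congr g; apply/ffunP => i; rewrite !ffunE.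
    by rewrite (leq_trans (ltn_ord i) le_nm) (leq_trans (ltn_ord i) (leqW le_nm)).
  pose im := Ordinal lt_mn.
  have -> : sm m.+1 = upd (sm m) im (s' im).
    apply/ffunP => i; rewrite !ffunE ltnS leq_eqVlt -[_ == m]/(i == im).
    by case: eqVneq => [->|].
  have sm_im : sm m im = s im by rewrite ffunE ltnn.
  have {1}-> : sm m = upd (sm m) im (s im) by rewrite -sm_im upd_id.
  by case: (boolP (im \in essential g)) => [/agree ->|/inessential_upd].
have -> : s = sm 0 by apply/ffunP => i; rewrite ffunE.
have -> : s' = sm n by apply/ffunP => i; rewrite ffunE ltn_ord.
by elim: n => // m ->.
Qed.

Lemma card_separating_le_log (R : finType) (g : {ffun 'I_n -> bool} -> R)
    (E : {set 'I_n}) :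
  {in E, forall i, separates_at g i} -> #|E| <= trunc_log 2 #|R|.
Proof.
move=> sep; apply: trunc_log_max => //.
pose ind (S : {set 'I_n}) := [ffun i => i \in S].
rewrite -card_powerset -(@card_in_imset _ _ (fun S => g (ind S))); first exact: max_card.
move=> S S' /[!inE] sSE sS'E eq_g; apply/setP => i.
case: (eqVneq (i \in S) (i \in S')) => // neq.
have iE : i \in E.
  have : (i \in S) || (i \in S') by move: neq; case: (i \in S); case: (i \in S').
  by case/orP => [/(subsetP sSE)|/(subsetP sS'E)].
by have := sep i iE (ind S) (ind S'); rewrite !ffunE eq_g eqxx => /(_ neq).
Qed.

End BooleanCube.

Lemma subset_codom_ord (m k : nat) (E : {set 'I_m.+1}) :
  #|E| <= k -> exists ids : {ffun 'I_k -> 'I_m.+1}, E \subset codom ids.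
Proof.
move=> le_Ek; exists [ffun j : 'I_k => nth ord0 (enum E) j].
apply/subsetP => i iE; apply/codomP.
have lt_ik : index i (enum E) < k.
  by apply: leq_trans le_Ek; rewrite cardE index_mem mem_enum.
by exists (Ordinal lt_ik); rewrite ffunE nth_index ?mem_enum.
Qed.

Definition juntas (R : finType) (n k : nat) :=
  [set g : {ffun {ffun 'I_n -> bool} -> R} | #|essential g| <= k].

Lemma card_juntas (R : finType) (n k : nat) :
  #|juntas R n.+1 k| <= n.+1 ^ k * #|R| ^ 2 ^ k.
Proof.
pose junta (p : {ffun 'I_k -> 'I_n.+1} * {ffun {ffun 'I_k -> bool} -> R}) :
  {ffun {ffun 'I_n.+1 -> bool} -> R} :=
  [ffun s : {ffun 'I_n.+1 -> bool} => p.2 [ffun j => s (p.1 j)]].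
suff sub : juntas R n.+1 k \subset junta @: setT.
  apply: leq_trans (subset_leq_card sub) _; apply: leq_trans (leq_imset_card _ _) _.
  by rewrite cardsT card_prod !card_ffun !card_ord card_bool.
apply/subsetP => g; rewrite inE => /subset_codom_ord [ids cover].
pose lift (u : {ffun 'I_k -> bool}) : {ffun 'I_n.+1 -> bool} :=
  [ffun i => if [pick j | ids j == i] is Some j then u j else false].
apply/imsetP; exists (ids, [ffun u => g (lift u)]) => //.
apply/ffunP => s; rewrite !ffunE; apply: essential_agree => i.
move=> /(subsetP cover) /codomP [j ->]; rewrite ffunE.
by case: pickP => [j' /eqP <-|/(_ j)]; rewrite ?ffunE ?eqxx.
Qed.

Section TermOperations.
Variables (T : finType) (I : Type) (ar : I -> nat)
  (ops : forall o : I, ('I_(ar o) -> T) -> T).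

Fixpoint rename n m (f : 'I_n -> 'I_m) (t : term ar n) : term ar m :=
  match t with
  | Var i => Var ar (f i)
  | App o g => App (fun j => rename f (g j))
  end.

Lemma eval_rename n m (f : 'I_n -> 'I_m) t x :
  eval_term ops (rename f t) x = eval_term ops t (x \o f).
Proof.
elim: t => [i|o g IH] //=; congr ops; apply: functional_extensionality => j.
exact: IH.
Qed.

Lemma Clo_rename n m (f : 'I_n -> 'I_m) t :
  Clo ops t -> Clo ops (fun w => t (w \o f)).
Proof. by case=> tm Htm; exists (rename f tm) => x; rewrite eval_rename Htm. Qed.

Variable alpha : rel T.
Hypothesis sa : strongly_abelian ops alpha.

Lemma strongly_abelian_at n (t : ('I_n -> T) -> T) i (x y z : 'I_n -> T) :
  Clo ops t ->
  (forall j, alpha (x j) (y j)) -> (forall j, j != i -> alpha (y j) (z j)) ->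
  t x = t y ->
  t (fun j => if j == i then x i else z j) = t (fun j => if j == i then y i else z j).
Proof.
case: n t i x y z => [|n] t i x y z Ct xy yz eq_t; first by have := ltn_ord i.
pose p := tperm ord0 i.
have pK w : (w \o p) \o p = w.
  by apply: functional_extensionality => j /=; rewrite tpermK.
have p_eq0 j : (p j == ord0) = (j == i).
  by rewrite -{1}(tpermR ord0 i) (inj_eq perm_inj).
have upd_p v : (fun j => if j == i then v else z j)
               = (fun j => if j == ord0 then v else (z \o p) j) \o p.
  by apply: functional_extensionality => j /=; rewrite p_eq0 tpermK.
have p0 : p ord0 = i := tpermL _ _.
have := @sa _ _ (Clo_rename p Ct) (x \o p) (y \o p) (z \o p).
rewrite /= !pK p0 -!upd_p; apply=> // j j0.
by apply: yz; rewrite -p_eq0 tpermK.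
Qed.

End TermOperations.

Section Restriction.
Variables (T : finType) (I : Type) (ar : I -> nat)
  (ops : forall o : I, ('I_(ar o) -> T) -> T) (alpha : rel T) (a b : T).
Hypotheses (cong : is_congruence ops alpha) (sa : strongly_abelian ops alpha)
  (ab : alpha a b).

Definition encode n (s : {ffun 'I_n -> bool}) : 'I_n -> T :=
  fun i => if s i then b else a.

Definition restrict n (t : ('I_n -> T) -> T) : {ffun {ffun 'I_n -> bool} -> T} :=
  [ffun s => t (encode s)].

Lemma alpha_encode n (s s' : {ffun 'I_n -> bool}) i : alpha (encode s i) (encode s' i).
Proof.
case: cong => refl sym _ _.
by rewrite /encode; case: (s i); case: (s' i); rewrite ?refl // sym.
Qed.

Lemma encode_upd n (s s0 : {ffun 'I_n -> bool}) i :
  (fun j => if j == i then encode s i else encode s0 j) = encode (upd s0 i (s i)).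
Proof.
by apply: functional_extensionality => j; rewrite /encode ffunE; case: (j == i).
Qed.

Lemma restrict_separates_essential n (t : ('I_n -> T) -> T) :
  Clo ops t -> {in essential (restrict t), forall i, separates_at (restrict t) i}.
Proof.
move=> Ct i /[!inE] /existsP [s0 flip_s0] s s' neq; apply: contra flip_s0.
rewrite !ffunE => /eqP eq_t.
have := strongly_abelian_at sa Ct (alpha_encode s s') (fun j _ => alpha_encode s' s0 j) eq_t.
move/(_ i); rewrite !encode_upd; move: neq.
by case: (s i); case: (s' i) => //= _ ->.
Qed.

End Restriction.

Theorem proposition3p4 (T : finType) (I : Type) (ar : I -> nat)
    (ops : forall o : I, ('I_(ar o) -> T) -> T) (alpha : rel T)
    (a b : T) :
  is_congruence ops alpha -> strongly_abelian ops alpha -> alpha a b ->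
  exists (C N : nat), forall n : nat, N <= n ->
    #|F_ab ops a b n| <= C * n ^ (trunc_log 2 #|T|).
Proof.
move=> cong sa ab; set k := trunc_log 2 #|T|.
exists (#|T| ^ 2 ^ k), 1; case=> [//|n] _.
have sub : F_ab ops a b n.+1 \subset juntas T n.+1 k.
  apply/subsetP => g; rewrite !inE /asb.
  case: excluded_middle_informative => //= [[t [Ct ->]]] _.
  exact: card_separating_le_log (restrict_separates_essential cong sa ab Ct).
by rewrite mulnC; apply: leq_trans (subset_leq_card sub) (card_juntas _ _ _).
Qed.
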